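(* Let $m,n\ge 2$ be integers. Then $IDI(P_m\square P_n)=2$ if $(m,n)\neq(2,2)$, and $IDI(P_2\square P_2)=3$.
   Context: $P_k$ is the path on $k$ vertices and $\square$ the Cartesian product, so $P_m\square P_n$ is the $m\times n$ grid. For a finite simple connected graph $G=(V,E)$ with diameter $d$, a rank assignment is a function $f:V\to\mathbb{R}$; under $f$, the string of a vertex $v$ is the $d$-vector whose $i$-th coordinate is the sum of $f(w)$ over all vertices $w$ with $d(v,w)=i$. The ID-index $IDI(G)$ is the minimum $k$ such that there exists $f:V\to\mathbb{R}$ with $|f(V)|=k$ under which all vertices have distinct strings. *)

From HB Require Import structures.
From mathcomp Require Import all_boot all_order all_algebra.
From mathcomp Require Import reals.
Set Implicit Arguments. Unset Strict Implicit. Unset Printing Implicit Defensive.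
Import Order.TTheory GRing.Theory Num.Theory.
Local Open Scope ring_scope.

Definition path_graph (k : nat) : rel 'I_k :=
  fun i j => (i.+1 == j :> nat) || (j.+1 == i :> nat).

Definition cart_prod (T1 T2 : finType) (e1 : rel T1) (e2 : rel T2) : rel (T1 * T2) :=
  fun x y => ((x.1 == y.1) && e2 x.2 y.2) || ((x.2 == y.2) && e1 x.1 y.1).

Definition grid (m n : nat) : rel ('I_m * 'I_n) :=
  @cart_prod _ _ (@path_graph m) (@path_graph n).

Fixpoint ball (T : finType) (e : rel T) (k : nat) (x : T) : {set T} :=
  match k with
  | 0 => [set x]
  | k.+1 => ball e k x :|: [set y | [exists z in ball e k x, e z y]]
  end.

(* Graph distance: least k with y within k steps of x
   (for connected graphs this is < #|T|). *)
Definition gdist (T : finType) (e : rel T) (x y : T) : nat :=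
  find (fun k => y \in ball e k x) (iota 0 #|T|).

Definition diam (T : finType) (e : rel T) : nat :=
  \max_(v : T) \max_(w : T) gdist e v w.

Definition vstring (R : realType) (T : finType) (e : rel T) (f : T -> R) (v : T)
  : {ffun 'I_(diam e) -> R} :=
  [ffun i : 'I_(diam e) => \sum_(w : T | gdist e v w == i.+1) f w].

Definition nvals (R : realType) (T : finType) (f : T -> R) : nat :=
  size (undup [seq f v | v <- enum T]).

Definition id_assignment (R : realType) (T : finType) (e : rel T) (f : T -> R) : Prop :=
  injective (vstring e f).

Definition is_IDI (R : realType) {T : finType} (e : rel T) (k : nat) : Prop :=
  (exists f : T -> R, id_assignment e f /\ nvals f = k) /\
  (forall f : T -> R, id_assignment e f -> (k <= nvals f)%N).

From HB Require Import structures.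
From mathcomp Require Import all_boot all_order all_algebra.
From mathcomp Require Import reals.
From mathcomp Require Import zify.
Set Implicit Arguments. Unset Strict Implicit. Unset Printing Implicit Defensive.
Import GRing.Theory Num.Theory.

(* If the rank of a vertex is its multiplicity in a list L of landmarks, the
   string of v counts, for each k > 0, the landmarks at distance k from v: it
   is the multiset of nonzero distances from v to L.  Distances in the grid are
   Manhattan distances.  For grids other than 2 x 2 three distinct landmarks
   already separate all vertices in this sense: the corner (0,0) and the two
   last vertices (0,n-2), (0,n-1) of the first row when n >= 4 (symmetrically
   when m >= 4), and explicit triples checked by computation for the 2 x 3,
   3 x 2 and 3 x 3 grids; this gives an ID assignment with two values.  One
   value never suffices: a constant assignment is invariant under a reflection
   of the grid, which preserves strings but moves a corner.  On the 4-cycle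
   P_2 [] P_2 an ID assignment separates opposite vertices, so with only two
   values it is invariant under one of the reflections of the square; the
   weights 2 and 1 on two adjacent vertices and 0 elsewhere do work. *)

Section GraphDistance.

Variables (T : finType) (e : rel T).

Lemma gdist_eq0 x y : (gdist e x y == 0) = (y == x).
Proof.
have : 0 < #|T| by apply/card_gt0P; exists x.
by rewrite /gdist; case: #|T| => //= N _; rewrite in_set1; case: (y == x).
Qed.

Lemma gdist_le_diam x y : gdist e x y <= diam e.
Proof.
exact: leq_trans (@leq_bigmax _ (gdist e x) y) (@leq_bigmax _ (fun v => \max_w gdist e v w) x).
Qed.

Section DistanceFrom.

Variables (x : T) (d : T -> nat).
Hypothesis d_eq0 : forall y, (d y == 0) = (y == x).
Hypothesis d_edge : forall z y, e z y -> d y <= (d z).+1.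
Hypothesis d_pred : forall y, 0 < d y -> exists2 z, e z y & (d z).+1 = d y.

Lemma mem_ball_dist k y : (y \in ball e k x) = (d y <= k).
Proof.
elim: k y => [|k IHk] y /=; first by rewrite in_set1 leqn0 d_eq0.
rewrite in_setU IHk inE; apply/orP/idP => [[/leqW //|/existsP[z /andP[]]]|le_yk1].
  by rewrite IHk => le_zk /d_edge /leq_trans; apply.
case: (leqP (d y) k) => [|lt_ky]; [by left | right].
have [z ezy dz] := d_pred (leq_ltn_trans (leq0n k) lt_ky).
by apply/existsP; exists z; rewrite IHk ezy andbT -ltnS dz.
Qed.

Lemma gdist_eq_dist y : d y < #|T| -> gdist e x y = d y.
Proof.
move=> lt_yT; rewrite /gdist (eq_find (fun k => mem_ball_dist k y)).
rewrite -(subnKC (ltnW lt_yT)) iotaD find_cat size_iota add0n.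
have /negbTE-> : ~~ has (fun k => d y <= k) (iota 0 (d y)).
  by apply/hasPn => k; rewrite mem_iota -ltnNge.
by rewrite -subn_gt0 in lt_yT; case: (#|T| - d y) lt_yT => [|N] //= _; rewrite leqnn addn0.
Qed.

End DistanceFrom.

Definition isometric (s : T -> T) := forall x y, gdist e (s x) (s y) = gdist e x y.

Lemma isometric_inj s : isometric s -> injective s.
Proof. by move=> iso_s x y sxy; apply/eqP; rewrite -gdist_eq0 -iso_s sxy gdist_eq0. Qed.

Section Strings.

Variables (R : realType) (f : T -> R).

Lemma vstring_isometric s v :
  isometric s -> (forall w, f (s w) = f w) -> vstring e f (s v) = vstring e f v.
Proof.
move=> iso_s fs; apply/ffunP => i; rewrite !ffunE (reindex_inj (isometric_inj iso_s)).
by apply: eq_big => [w|w _]; rewrite ?iso_s ?fs.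
Qed.

Lemma id_assignment_rigid s :
  id_assignment e f -> isometric s -> (forall w, f (s w) = f w) -> s =1 id.
Proof. by move=> idf iso_s fs v; apply/idf/vstring_isometric. Qed.

Lemma vstring_eq_sum v v' : vstring e f v = vstring e f v' ->
  forall k, 0 < k -> (\sum_(w | gdist e v w == k) f w = \sum_(w | gdist e v' w == k) f w)%R.
Proof.
move=> vvE [//|k] _; case: (ltnP k (diam e)) => [lt_k|lt_dk].
  by have := congr1 (fun g : {ffun _ -> R} => g (Ordinal lt_k)) vvE; rewrite !ffunE.
suff far u : (\sum_(w | gdist e u w == k.+1) f w = 0)%R by rewrite !far.
by apply: big_pred0 => w; apply/negbTE; rewrite neq_ltn ltnS (leq_trans (gdist_le_diam u w)).
Qed.

End Strings.

End GraphDistance.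

Section DistinctValues.

Variables (R : realType) (T : finType) (f : T -> R).

Lemma nvals_ge (s : seq R) : uniq s -> {subset s <= codom f} -> size s <= nvals f.
Proof. by move=> uniq_s sub_s; apply: uniq_leq_size => // x /sub_s; rewrite mem_undup. Qed.

Lemma nvals_eq (s : seq R) : uniq s -> codom f =i s -> nvals f = size s.
Proof.
move=> uniq_s fs; apply/perm_size/uniq_perm; rewrite ?undup_uniq // => x.
by rewrite mem_undup fs.
Qed.

Lemma nvals_gt1 x y : f x != f y -> 1 < nvals f.
Proof.
move=> fxy; apply: (nvals_ge (s := [:: f x; f y])) => [|z]; first by rewrite /= inE fxy.
by rewrite !inE => /orP[]/eqP->; apply: codom_f.
Qed.

Lemma nvals_gt2 x y z : f x != f y -> f x != f z -> f y != f z -> 2 < nvals f.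
Proof.
move=> fxy fxz fyz; apply: (nvals_ge (s := [:: f x; f y; f z])).
  by rewrite /= !inE negb_or fxy fxz fyz.
by move=> w; rewrite !inE => /or3P[]/eqP->; apply: codom_f.
Qed.

Lemma id_assignment_nvals_gt1 (e : rel T) s v :
  isometric e s -> s v != v -> id_assignment e f -> 1 < nvals f.
Proof.
move=> iso_s sv idf; rewrite ltnNge; apply: contra sv => le1.
apply/eqP/(id_assignment_rigid idf iso_s) => w; apply/eqP.
by apply: contraLR le1; rewrite -ltnNge; apply: nvals_gt1.
Qed.

End DistinctValues.

Section Landmarks.

Variable T : eqType.
Implicit Types (d : T -> T -> nat) (L : seq T).

Definition pos_dists d L v : seq nat := [seq k <- map (d v) L | 0 < k].

Definition multiset_resolving d L :=
  forall v v', perm_eq (pos_dists d L v) (pos_dists d L v') -> v = v'.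

Lemma count_pos_dists d L v k :
  count_mem k (pos_dists d L v) = ((0 < k) * count (fun p => d v p == k) L)%N.
Proof.
rewrite count_filter count_map; case: posnP => [->|k_gt0]; last first.
  by rewrite mul1n; apply: eq_count => p /=; case: eqP => // ->.
by rewrite mul0n (eq_count (a2 := pred0)) ?count_pred0 // => p; rewrite /= lt0n andbN.
Qed.

Lemma multiset_resolving_enum d L (s : seq T) : (forall v, v \in s) ->
  all (fun v => all (fun v' => perm_eq (pos_dists d L v) (pos_dists d L v') ==> (v == v')) s) s ->
  multiset_resolving d L.
Proof.
by move=> s_full /allP res v v' /(implyP (allP (res v (s_full v)) v' (s_full v'))) /eqP.
Qed.

End Landmarks.

Definition landmark_weight (R : nzSemiRingType) (T : eqType) (L : seq T) (w : T) : R :=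
  (count_mem w L)%:R%R.
Arguments landmark_weight {R T}.

Lemma sum_landmark_weight (R : nzSemiRingType) (T : finType) (L : seq T) (P : pred T) :
  (\sum_(w | P w) landmark_weight L w = (count P L)%:R :> R)%R.
Proof.
rewrite -natr_sum; congr (_%:R)%R; elim: L => [|p L IHL] /=; first by rewrite big1.
rewrite big_split /= IHL; congr (_ + _)%N.
have [Pp|nPp] := boolP (P p).
  by rewrite (bigD1 p) //= eqxx big1 ?addn0 // => w /andP[_]; rewrite eq_sym => /negbTE->.
by rewrite big1 // => w Pw; case: eqP Pw => // <-; rewrite (negbTE nPp).
Qed.

Section LandmarkWeights.

Variables (R : realType) (T : finType) (L : seq T).

Lemma landmark_weight_id (e : rel T) :
  multiset_resolving (gdist e) L -> id_assignment e (landmark_weight L : T -> R).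
Proof.
move=> res v v' vvE; apply: res; apply/allP => k _; apply/eqP.
rewrite !count_pos_dists; case: posnP => // k_gt0; apply/eqP.
by rewrite !mul1n -(eqr_nat R) -!sum_landmark_weight (vstring_eq_sum vvE).
Qed.

Lemma nvals_landmark_uniq : uniq L -> 0 < size L < #|T| ->
  nvals (landmark_weight L : T -> R) = 2.
Proof.
move=> uniqL /andP[L_gt0 L_small].
have [v vL] : exists v, v \in L.
  by case: L L_gt0 {uniqL L_small} => // v L' _; exists v; rewrite inE eqxx.
have [u uL] : exists u, u \notin L.
  apply/existsP; apply: contraTT L_small; rewrite negb_exists => /forallP allL.
  rewrite -leqNgt cardE; apply: uniq_leq_size (enum_uniq _) _ => w _.
  by have := allL w; rewrite negbK.
apply: (nvals_eq (s := [:: 1; 0]%R)) => [|x]; first by rewrite /= inE oner_neq0.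
rewrite !inE /landmark_weight; apply/codomP/idP => [[w ->]|/orP[]/eqP->].
- by rewrite count_uniq_mem //; case: (w \in L); rewrite eqxx ?orbT.
- by exists v; rewrite count_uniq_mem // vL.
- by exists u; rewrite count_uniq_mem // (negbTE uL).
Qed.

End LandmarkWeights.

Section Grid.

Variables m n : nat.
Implicit Types x y z : 'I_m * 'I_n.

Definition manhattan x y := `|x.1 - y.1| + `|x.2 - y.2|.

Lemma grid_edgeE x y : @grid m n x y = (manhattan x y == 1).
Proof.
case: x y => [a b] [c d]; rewrite /grid /cart_prod /path_graph /manhattan /=.
by rewrite -[a == c]val_eqE -[b == d]val_eqE /=; lia.
Qed.

Lemma ord_step k (a b : 'I_k) :
  a != b -> exists c : 'I_k, `|c - b| = 1 /\ (`|a - c|).+1 = `|a - b|.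
Proof.
case: (ltngtP a b) => [lt_ab|lt_ba|/val_inj->]; last by rewrite eqxx.
  have lt_b1 : b.-1 < k := leq_ltn_trans (leq_pred b) (ltn_ord b).
  by exists (Ordinal lt_b1) => /=; lia.
have lt_b1 : b.+1 < k := leq_ltn_trans lt_ba (ltn_ord a).
by exists (Ordinal lt_b1) => /=; lia.
Qed.

Lemma gdist_grid x y : gdist (@grid m n) x y = manhattan x y.
Proof.
apply: gdist_eq_dist => [w|z w|w|].
- case: x w => [a b] [c d]; rewrite /manhattan xpair_eqE.
  by rewrite -[c == a]val_eqE -[d == b]val_eqE /=; lia.
- by rewrite grid_edgeE /manhattan; lia.
- case: x w => [a b] [c d]; rewrite /manhattan /= => pos.
  case: (eqVneq a c) pos => [<-|ac] pos.
    have [|b' [b'd ab']] := ord_step (a := b) (b := d).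
      by apply: contraTneq pos => <-; lia.
    by exists (a, b'); rewrite ?grid_edgeE /manhattan /=; lia.
  have [a' [a'c aa']] := ord_step ac.
  by exists (a', d); rewrite ?grid_edgeE /manhattan /=; lia.
- rewrite card_prod !card_ord /manhattan.
  by have := ltn_ord x.1; have := ltn_ord x.2; have := ltn_ord y.1; have := ltn_ord y.2; nia.
Qed.

Lemma grid_isometric s :
  (forall x y, manhattan (s x) (s y) = manhattan x y) -> isometric (@grid m n) s.
Proof. by move=> iso_s x y; rewrite !gdist_grid. Qed.

Lemma grid_landmark_weight_id (R : realType) (L : seq ('I_m * 'I_n)) :
  multiset_resolving manhattan L -> id_assignment (@grid m n) (landmark_weight L : _ -> R).
Proof.
move=> res; apply: landmark_weight_id => v v'.
by rewrite /pos_dists (eq_map (gdist_grid v)) (eq_map (gdist_grid v')); apply: res.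
Qed.

Definition flip_rows x : 'I_m * 'I_n := (rev_ord x.1, x.2).
Definition flip_cols x : 'I_m * 'I_n := (x.1, rev_ord x.2).

Lemma manhattan_flip_rows x y : manhattan (flip_rows x) (flip_rows y) = manhattan x y.
Proof.
by case: x y => [a b] [c d]; rewrite /manhattan /=; have := ltn_ord a; have := ltn_ord c; lia.
Qed.

Lemma manhattan_flip_cols x y : manhattan (flip_cols x) (flip_cols y) = manhattan x y.
Proof.
by case: x y => [a b] [c d]; rewrite /manhattan /=; have := ltn_ord b; have := ltn_ord d; lia.
Qed.

Lemma grid_nvals_gt1 (R : realType) (f : 'I_m * 'I_n -> R) :
  1 < m -> 0 < n -> id_assignment (@grid m n) f -> 1 < nvals f.
Proof.
move=> m_gt1 n_gt0; pose v : 'I_m * 'I_n := (Ordinal (ltnW m_gt1), Ordinal n_gt0).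
apply: (id_assignment_nvals_gt1 (s := flip_rows) (v := v)).
  exact: grid_isometric manhattan_flip_rows.
by apply/eqP => /(congr1 (fun x => nat_of_ord x.1)) /=; lia.
Qed.

End Grid.

Arguments manhattan {m n}.
Arguments flip_rows {m n}.
Arguments flip_cols {m n}.

Definition transpose m n (x : 'I_m * 'I_n) : 'I_n * 'I_m := (x.2, x.1).

Lemma manhattan_transpose m n (x y : 'I_m * 'I_n) :
  manhattan (transpose x) (transpose y) = manhattan x y.
Proof. by rewrite /manhattan addnC. Qed.

Lemma multiset_resolving_transpose m n (L : seq ('I_n * 'I_m)) :
  multiset_resolving manhattan L -> multiset_resolving manhattan (map (@transpose n m) L).
Proof.
move=> res v v'.
have dists u :
    pos_dists manhattan (map (@transpose n m) L) u = pos_dists manhattan L (transpose u).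
  by rewrite /pos_dists -map_comp; congr filter; apply: eq_map => p; rewrite /= /manhattan addnC.
by rewrite !dists => /res; case: v v' => [? ?] [? ?] [-> ->].
Qed.

Definition antitranspose n (x : 'I_n * 'I_n) : 'I_n * 'I_n := (rev_ord x.2, rev_ord x.1).

Lemma manhattan_antitranspose n (x y : 'I_n * 'I_n) :
  manhattan (antitranspose x) (antitranspose y) = manhattan x y.
Proof.
case: x y => [a b] [c d]; rewrite /manhattan /=.
by have := ltn_ord a; have := ltn_ord b; have := ltn_ord c; have := ltn_ord d; lia.
Qed.

(* [inZp] rather than [inord]: the latter goes through the opaque [idP] and
   does not reduce under [vm_compute]. *)
Definition grid_enum m n : seq ('I_m.+1 * 'I_n.+1) :=
  [seq (inZp i, inZp j) | i <- iota 0 m.+1, j <- iota 0 n.+1].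

Lemma mem_grid_enum m n x : x \in grid_enum m n.
Proof.
case: x => [a b]; apply/allpairsP; exists (val a, val b).
by rewrite !mem_iota !ltn_ord /= !valZpK.
Qed.

Lemma sumn_filter_pos (s : seq nat) : sumn [seq k <- s | 0 < k] = sumn s.
Proof. by elim: s => //= -[|k] s; rewrite /= => ->. Qed.

Lemma perm_filter_pos_mem (s s' : seq nat) k :
  perm_eq [seq k <- s | 0 < k] [seq k <- s' | 0 < k] -> 0 < k -> (k \in s) = (k \in s').
Proof. by move=> /perm_mem ss' k_gt0; have := ss' k; rewrite !mem_filter k_gt0. Qed.

Lemma row_triple_resolving n i j i' j' : 2 < n -> j <= n -> j' <= n ->
  perm_eq [seq k <- [:: i + j; i + `|j - n.-1|; i + `|j - n|] | 0 < k]
          [seq k <- [:: i' + j'; i' + `|j' - n.-1|; i' + `|j' - n|] | 0 < k] ->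
  i = i' /\ j = j'.
Proof.
move=> n_gt2 le_jn le_j'n ds_eq.
have := perm_sumn ds_eq; rewrite !sumn_filter_pos /=.
have := perm_filter_pos_mem ds_eq (k := i + `|j - n|).
have := perm_filter_pos_mem ds_eq (k := i' + `|j' - n|).
by rewrite !inE !eqxx !orbT; lia.
Qed.

Definition row_landmarks m n : seq ('I_m.+1 * 'I_n.+1) :=
  [:: (ord0, ord0); (ord0, inord n.-1); (ord0, ord_max)].

Lemma uniq_row_landmarks m n : 2 < n -> uniq (row_landmarks m n).
Proof.
move=> n_gt2; rewrite /= !inE !xpair_eqE eqxx /=.
by rewrite -!val_eqE /= inordK; lia.
Qed.

Lemma row_landmarks_resolving m n : 2 < n -> multiset_resolving manhattan (row_landmarks m n).
Proof.
move=> n_gt2.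
have dists (v : 'I_m.+1 * 'I_n.+1) : map (manhattan v) (row_landmarks m n) =
    [:: v.1 + v.2; v.1 + `|v.2 - n.-1|; v.1 + `|v.2 - n|].
  by rewrite /manhattan /= inordK; [congr [:: _; _; _]; lia | lia].
move=> [i j] [i' j']; rewrite /pos_dists !dists.
by case/(row_triple_resolving n_gt2 (ltn_ord j) (ltn_ord j')) => /= /val_inj-> /val_inj->.
Qed.

Section Grid22.

Variable R : realType.

(* The vertices are written with [rev_ord ord0] for 1, so that the images of
   the corners under the reflections simplify to corners by [rev_ordK]. *)
Local Notation c00 := ((ord0, ord0) : 'I_2 * 'I_2).
Local Notation c01 := ((ord0, rev_ord ord0) : 'I_2 * 'I_2).
Local Notation c10 := ((rev_ord ord0, ord0) : 'I_2 * 'I_2).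
Local Notation c11 := ((rev_ord ord0, rev_ord ord0) : 'I_2 * 'I_2).

Lemma grid22_cases (w : 'I_2 * 'I_2) : [|| w == c00, w == c01, w == c10 | w == c11].
Proof. by case: w => [[[|[|?]] ?] [[|[|?]] ?]]. Qed.

Lemma grid22_ind (P : 'I_2 * 'I_2 -> Prop) : P c00 -> P c01 -> P c10 -> P c11 -> forall w, P w.
Proof. by move=> ? ? ? ? w; case/or4P: (grid22_cases w) => /eqP->. Qed.

Lemma grid22_nvals_gt2 (f : 'I_2 * 'I_2 -> R) : id_assignment (@grid 2 2) f -> 2 < nvals f.
Proof.
move=> idf.
have rigid s v : (forall x y, manhattan (s x) (s y) = manhattan x y) -> s v != v ->
    f (s c00) = f c00 -> f (s c01) = f c01 -> f (s c10) = f c10 -> f (s c11) = f c11 -> False.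
  move=> iso_s /eqP sv ? ? ? ?; apply/sv/(id_assignment_rigid idf (grid_isometric iso_s)).
  exact: grid22_ind.
have diag : f c00 != f c11.
  apply/eqP => f00_11; apply: (rigid _ c00 (@manhattan_antitranspose 2));
  by rewrite /antitranspose /= ?rev_ordK ?f00_11.
have antidiag : f c01 != f c10.
  apply/eqP => f01_10; apply: (rigid _ c01 (@manhattan_transpose 2 2));
  by rewrite /transpose /= ?f01_10.
rewrite ltnNge; apply/negP => le2.
have two_vals w : f w = f c00 \/ f w = f c11.
  case: (eqVneq (f w) (f c00)) => [|w00]; [by left | right].
  apply/eqP; apply: contraLR le2 => w11; rewrite -ltnNge.
  exact: (nvals_gt2 (x := w) (y := c00) (z := c11)).
case: (two_vals c01) => f01.
  have f10 : f c10 = f c11 by case: (two_vals c10) => // f10; rewrite f01 f10 eqxx in antidiag.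
  by apply: (rigid _ c00 (@manhattan_flip_cols 2 2)); rewrite /flip_cols /= ?rev_ordK ?f01 ?f10.
have f10 : f c10 = f c00 by case: (two_vals c10) => // f10; rewrite f01 f10 eqxx in antidiag.
by apply: (rigid _ c00 (@manhattan_flip_rows 2 2)); rewrite /flip_rows /= ?rev_ordK ?f01 ?f10.
Qed.

Definition landmarks22 : seq ('I_2 * 'I_2) := [:: c10; c10; c11].

Lemma landmarks22_resolving : multiset_resolving manhattan landmarks22.
Proof. by apply: (multiset_resolving_enum (@mem_grid_enum 1 1)); vm_compute. Qed.

Lemma nvals_landmarks22 : nvals (landmark_weight landmarks22 : _ -> R) = 3.
Proof.
apply: (nvals_eq (s := [:: 0%:R; 1%:R; 2%:R]%R)) => [|x]; first by rewrite /= !inE !eqr_nat.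
rewrite !inE; apply/codomP/idP => [[w ->]|/or3P[]/eqP->].
- by case/or4P: (grid22_cases w) => /eqP->; rewrite /landmark_weight /= eqxx ?orbT.
- by exists c00.
- by exists c11.
- by exists c10.
Qed.

End Grid22.

Definition landmarks23 : seq ('I_2 * 'I_3) := [:: (ord0, ord0); (ord0, ord_max); (ord_max, ord0)].

(* Any three corners of the 3 x 3 grid are symmetric under a reflection,
   hence the non-corner landmark (1,0). *)
Definition landmarks33 : seq ('I_3 * 'I_3) := [:: (ord0, ord0); (ord0, ord_max); (inZp 1, ord0)].

Lemma landmarks23_resolving : multiset_resolving manhattan landmarks23.
Proof. by apply: (multiset_resolving_enum (@mem_grid_enum 1 2)); vm_compute. Qed.

Lemma landmarks33_resolving : multiset_resolving manhattan landmarks33.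
Proof. by apply: (multiset_resolving_enum (@mem_grid_enum 2 2)); vm_compute. Qed.

Lemma grid_resolving_triple m n : 1 < m -> 1 < n -> ~~ ((m == 2) && (n == 2)) ->
  exists L : seq ('I_m * 'I_n), [/\ uniq L, size L = 3 & multiset_resolving manhattan L].
Proof.
have uniq_transpose p q (L : seq ('I_p * 'I_q)) : uniq (map (@transpose p q) L) = uniq L.
  by apply: map_inj_uniq => -[? ?] [? ?] [-> ->].
case: m => [|[|m]] // _; case: n => [|[|n]] // _ not22.
have [n_gt1|n_le1] := ltnP 1 n.
  exists (row_landmarks m.+1 n.+1); split=> //; first exact: uniq_row_landmarks.
  exact: row_landmarks_resolving.
have [m_gt1|m_le1] := ltnP 1 m.
  exists (map (@transpose _ _) (row_landmarks n.+1 m.+1)); split.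
  - by rewrite uniq_transpose uniq_row_landmarks.
  - by rewrite size_map.
  - by apply: multiset_resolving_transpose; apply: row_landmarks_resolving.
case: m m_le1 not22 => [|[|//]] _; case: n n_le1 => [|[|//]] _ //= _.
- by exists landmarks23; split=> //; exact: landmarks23_resolving.
- exists (map (@transpose _ _) landmarks23); split=> //.
  exact: multiset_resolving_transpose landmarks23_resolving.
- by exists landmarks33; split=> //; exact: landmarks33_resolving.
Qed.

Theorem mainTheorem8 (R : realType) (m n : nat) (hm : (2 <= m)%N) (hn : (2 <= n)%N) :
  @is_IDI R _ (@grid m n) (if (m == 2) && (n == 2) then 3 else 2).
Proof.
case: ifP => [/andP[/eqP m2 /eqP n2] | not22]; first subst m n.
  split; last by move=> f; apply: grid22_nvals_gt2.
  exists (landmark_weight landmarks22); split; last exact: nvals_landmarks22.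
  exact/grid_landmark_weight_id/landmarks22_resolving.
split; last by move=> f; apply: grid_nvals_gt1; rewrite ?(ltnW hn).
have [L [uniqL sizeL resL]] := grid_resolving_triple hm hn (negbT not22).
exists (landmark_weight L); split; first exact: grid_landmark_weight_id.
by apply: nvals_landmark_uniq; rewrite // sizeL card_prod !card_ord /=; nia.
Qed.
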